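(* Let $\Gamma\in\mathcal S$ have $n>1$ vertices. Then no embedding $\varphi$ of $\Gamma$ into $\mathbb Z^n$ (as in the definition of $\mathcal S$) has an index of type (3); that is, there is no index $i$ such that exactly one vertex $v$ has nonzero coefficient at $E_i$ in $\varphi(v)$ and that coefficient equals $-2$.
   Context: A plumbing tree is a finite tree $\Gamma$ each of whose vertices $v$ carries an integer decoration $d(v)$. $\Gamma$ is minimal if no vertex has decoration $-1$. For $n\ge 1$ let $(\mathbb Z^n,Q_n)$ be the lattice with basis $E_1,\dots,E_n$ and $Q_n(E_i,E_j)=-\delta_{ij}$, and let $K=\sum_{i=1}^n E_i$. A plumbing tree $\Gamma$ on $n$ vertices is a symplectic plumbing tree if there is a map $\varphi$ (an embedding) from its vertex set to $\mathbb Z^n$ such that: for distinct vertices $v_1,v_2$, $Q_n(\varphi(v_1),\varphi(v_2))$ is $1$ if they are adjacent and $0$ otherwise; $Q_n(\varphi(v),\varphi(v))=d(v)$ for every $v$; and $Q_n(\varphi(v),K)+Q_n(\varphi(v),\varphi(v))=-2$ for every $v$. $\mathcal S$ is the set of minimal, connected symplectic plumbing trees. *)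

From mathcomp Require Import all_boot all_order all_algebra.
Set Implicit Arguments. Unset Strict Implicit. Unset Printing Implicit Defensive.
Import Order.TTheory GRing.Theory Num.Theory.
Local Open Scope ring_scope.

Definition Qn (n : nat) (x y : 'I_n -> int) : int := - \sum_(i < n) x i * y i.

Definition Kvec (n : nat) : 'I_n -> int := fun _ => 1.

Definition simple_graph (V : finType) (adj : rel V) : Prop :=
  symmetric adj /\ irreflexive adj.

Definition is_tree (V : finType) (adj : rel V) : Prop :=
  [/\ simple_graph adj,
      (0 < #|V|)%N,
      (forall x y : V, connect adj x y)
    & (forall s : seq V, uniq s -> (2 < size s)%N -> ~~ cycle adj s)].

Definition minimal_deco (V : finType) (d : V -> int) : Prop :=
  forall v, d v != -1.

Definition symplectic_embedding (V : finType) (adj : rel V) (d : V -> int)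
    (n : nat) (phi : V -> 'I_n -> int) : Prop :=
  [/\ (forall v1 v2, v1 != v2 ->
         Qn (phi v1) (phi v2) = if adj v1 v2 then 1 else 0),
      (forall v, Qn (phi v) (phi v) = d v)
    & (forall v, Qn (phi v) (@Kvec n) + Qn (phi v) (phi v) = -2)].

Definition type3_index (V : finType) (n : nat) (phi : V -> 'I_n -> int)
    (i : 'I_n) : Prop :=
  exists v : V, phi v i = -2 /\ (forall w : V, w != v -> phi w i = 0).

(* Deleting the coordinate i of type (3) leaves n integer vectors psi_x in
   Z^(n-1) whose pairwise dot products are -1 along the edges of the tree and
   0 otherwise, whose coordinate sums are d(x) + 2 <= 0 for x <> v, and
   -|psi_v|^2 < 0 at the vertex v carrying the -2.  Such an obtuse family
   indexed by a connected graph is linearly independent: if sum lam_x psi_x = 0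
   then also sum |lam_x| psi_x = 0, since the Gram form can only drop when lam
   is replaced by |lam|; summing coordinates forces |lam_v| = 0, and taking
   the product with psi_x shows that |lam| vanishes at the neighbours of every
   vertex where it vanishes.  But n independent vectors do not fit in
   dimension n - 1. *)

From mathcomp Require Import all_boot all_order all_algebra.
From mathcomp Require Import zify ring lra.
Import Order.TTheory GRing.Theory Num.Theory.
Set Implicit Arguments.
Unset Strict Implicit.
Unset Printing Implicit Defensive.
Local Open Scope ring_scope.

Lemma sumr_sqr_eq0 (R : realDomainType) (I : finType) (F : I -> R) :
  \sum_i F i ^+ 2 = 0 -> forall i, F i = 0.
Proof.
move=> sqr0 i; apply/eqP; rewrite -sqrf_eq0; apply/eqP.
exact: (psumr_eq0P (P := xpredT) (fun k _ => sqr_ge0 (F k)) sqr0 isT).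
Qed.

Lemma nsumr_eq0P (R : numDomainType) (I : finType) (F : I -> R) :
  (forall i, F i <= 0) -> \sum_i F i = 0 -> forall i, F i = 0.
Proof.
move=> F_le0 sum0 i; apply/eqP; rewrite -oppr_eq0; apply/eqP.
apply: (psumr_eq0P (P := xpredT) (F := fun i => - F i)) => //.
  by move=> k _; rewrite oppr_ge0.
by rewrite sumrN sum0 oppr0.
Qed.

Lemma free_family_card_le (F : fieldType) (V : finType) (m : nat)
    (w : V -> 'I_m -> F) :
  (forall lam : V -> F, (forall j, \sum_x lam x * w x j = 0) ->
     forall x, lam x = 0) ->
  (#|V| <= m)%N.
Proof.
move=> free; rewrite leqNgt; apply/negP => ltmV.
pose A : 'M[F]_(#|V|, m) := \matrix_(k, j) w (enum_val k) j.
have /rowV0Pn[u /sub_kermxP uA0 /eqP[]] : kermx A != 0.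
  by rewrite -mxrank_eq0 mxrank_ker subn_eq0 -ltnNge (leq_ltn_trans (rank_leq_col A)).
have rel j : \sum_x u 0 (enum_rank x) * w x j = 0.
  transitivity ((u *m A) 0 j); last by rewrite uA0 mxE.
  rewrite mxE (reindex enum_rank) /=; last by apply: onW_bij; apply: enum_rank_bij.
  by apply: eq_bigr => x _; rewrite mxE enum_rankK.
by apply/rowP => k; rewrite mxE -[k]enum_valK; exact: free rel _.
Qed.

Section ObtuseFamily.

Variables (R : realFieldType) (V : finType) (m : nat) (w : V -> 'I_m -> R).

Local Notation dot x y := (\sum_j w x j * w y j).
Local Notation combination c j := (\sum_x c x * w x j).

Hypothesis obtuse : forall x y, x != y -> dot x y <= 0.

Lemma sum_sqr_combination (c : V -> R) :
  \sum_j combination c j ^+ 2 = \sum_x \sum_y c x * c y * dot x y.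
Proof.
transitivity (\sum_j \sum_x \sum_y c x * c y * (w x j * w y j)).
  apply: eq_bigr => j _; rewrite expr2 big_distrl /=.
  apply: eq_bigr => x _; rewrite big_distrr /=.
  by apply: eq_bigr => y _; ring.
rewrite exchange_big /=; apply: eq_bigr => x _.
by rewrite exchange_big /=; apply: eq_bigr => y _; rewrite mulr_sumr.
Qed.

(* Off the diagonal [|lam x| |lam y| dot x y <= lam x lam y dot x y], so the
   quadratic form can only decrease when [lam] is replaced by [|lam|]. *)
Lemma norm_combination_eq0 (lam : V -> R) :
  (forall j, combination lam j = 0) -> forall j, combination (fun x => `|lam x|) j = 0.
Proof.
move=> lam0.
have qlam : \sum_j combination lam j ^+ 2 = 0.
  by rewrite big1 // => j _; rewrite lam0 expr0n.
have : \sum_j combination (fun x => `|lam x|) j ^+ 2 = 0.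
  apply/eqP; rewrite eq_le sumr_ge0 ?andbT => [|j _]; last exact: sqr_ge0.
  rewrite -[X in _ <= X]qlam !sum_sqr_combination.
  apply: ler_sum => x _; apply: ler_sum => y _ /=.
  have [<-|xy] := eqVneq x y.
    by rewrite -normrM ger0_norm ?lexx // -expr2 sqr_ge0.
  have := obtuse xy; have : lam x * lam y <= `|lam x| * `|lam y|.
    by rewrite -normrM ler_norm.
  nra.
exact: sumr_sqr_eq0.
Qed.

Lemma nonneg_combination_adj_eq0 (mu : V -> R) x y :
  (forall x, 0 <= mu x) -> (forall j, combination mu j = 0) ->
  dot x y < 0 -> mu x = 0 -> mu y = 0.
Proof.
move=> mu_ge0 mu0 xy_lt0 mux0.
have xy : x != y.
  by apply: contraTneq xy_lt0 => <-; rewrite -leNgt sumr_ge0 // => j _; rewrite -expr2 sqr_ge0.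
have sum0 : \sum_z mu z * dot x z = 0.
  transitivity (\sum_j w x j * combination mu j); last first.
    by rewrite big1 // => j _; rewrite mu0 mulr0.
  under [RHS]eq_bigr do rewrite mulr_sumr.
  rewrite exchange_big /=; apply: eq_bigr => z _; rewrite mulr_sumr.
  by apply: eq_bigr => j _; ring.
have terms_le0 z : mu z * dot x z <= 0.
  have [<-|xz] := eqVneq x z; first by rewrite mux0 mul0r.
  exact: mulr_ge0_le0 (mu_ge0 z) (obtuse xz).
have /eqP := nsumr_eq0P terms_le0 sum0 y.
by rewrite mulf_eq0 (negbTE (ltr0_neq0 xy_lt0)) orbF => /eqP.
Qed.

Variable adj : rel V.
Hypothesis adj_obtuse : forall x y, adj x y -> dot x y < 0.
Hypothesis connected : forall x y, connect adj x y.

Lemma obtuse_family_free (v : V) :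
  (forall x, \sum_j w x j <= 0) -> \sum_j w v j < 0 ->
  forall lam : V -> R, (forall j, combination lam j = 0) -> forall x, lam x = 0.
Proof.
move=> sum_le0 sumv_lt0 lam lam0 x.
pose mu x := `|lam x|.
have mu_ge0 y : 0 <= mu y by exact: normr_ge0.
have mu0 := norm_combination_eq0 lam0.
have muv0 : mu v = 0.
  have weighted_sum0 : \sum_y mu y * \sum_j w y j = 0.
    under eq_bigr do rewrite mulr_sumr.
    by rewrite exchange_big /= big1.
  have /eqP := nsumr_eq0P (fun y => mulr_ge0_le0 (mu_ge0 y) (sum_le0 y)) weighted_sum0 v.
  by rewrite mulf_eq0 (negbTE (ltr0_neq0 sumv_lt0)) orbF => /eqP.
have dotC y z : dot y z = dot z y by apply: eq_bigr => j _; rewrite mulrC.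
have mu_closed : closed adj [pred y | mu y == 0].
  move=> y z yz; rewrite !inE; apply/eqP/eqP => mu_eq0.
    exact: nonneg_combination_adj_eq0 mu_ge0 mu0 (adj_obtuse yz) mu_eq0.
  by apply: nonneg_combination_adj_eq0 mu_ge0 mu0 _ mu_eq0; rewrite dotC adj_obtuse.
have := closed_connect mu_closed (connected v x); rewrite !inE muv0 eqxx.
by move=> /esym /eqP /normr0_eq0.
Qed.

Lemma obtuse_family_card_le (v : V) :
  (forall x, \sum_j w x j <= 0) -> \sum_j w v j < 0 -> (#|V| <= m)%N.
Proof.
move=> sum_le0 sumv_lt0; apply: free_family_card_le.
exact: obtuse_family_free sum_le0 sumv_lt0.
Qed.

End ObtuseFamily.

Lemma int_obtuse_family_card_le (V : finType) (m : nat) (w : V -> 'I_m -> int)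
    (adj : rel V) (v : V) :
  (forall x y, x != y -> \sum_j w x j * w y j <= 0) ->
  (forall x y, adj x y -> \sum_j w x j * w y j < 0) ->
  (forall x y, connect adj x y) ->
  (forall x, \sum_j w x j <= 0) -> \sum_j w v j < 0 ->
  (#|V| <= m)%N.
Proof.
move=> obtuse adj_obtuse connected sum_le0 sumv_lt0.
pose wq x j : rat := (w x j)%:~R.
have dotq x y : \sum_j wq x j * wq y j = (\sum_j w x j * w y j)%:~R.
  by rewrite rmorph_sum; apply: eq_bigr => j _; rewrite rmorphM.
have sumq x : \sum_j wq x j = (\sum_j w x j)%:~R by rewrite rmorph_sum.
apply: (@obtuse_family_card_le _ _ _ wq _ adj _ connected v) => [x y xy|x y xy|x|].
- by rewrite dotq lerz0 obtuse.
- by rewrite dotq ltrz0 adj_obtuse.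
- by rewrite sumq lerz0 sum_le0.
- by rewrite sumq ltrz0.
Qed.

Lemma connected_exists_adj (V : finType) (e : rel V) (v : V) :
  (forall x y, connect e x y) -> (1 < #|V|)%N -> exists z, e v z.
Proof.
move=> connected /card_gt1P[x [y [_ _ xy]]].
have [u vu] : exists u, v != u.
  by case: (eqVneq x v) => [<-|xv]; [exists y | exists x; rewrite eq_sym].
case/connectP: (connected v u) => [[|z p] /= path_vu last_vu].
  by rewrite last_vu eqxx in vu.
by case/andP: path_vu => vz _; exists z.
Qed.

Lemma sumr_lift_ord (R : nmodType) (n : nat) (i : 'I_n) (F : 'I_n -> R) :
  \sum_j F j = F i + \sum_(j < n.-1) F (lift i j).
Proof. exact: bigD1_ord. Qed.

Section SymplecticEmbedding.

Variables (V : finType) (adj : rel V) (d : V -> int) (n : nat).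
Variable phi : V -> 'I_n -> int.
Hypothesis emb : symplectic_embedding adj d phi.

Lemma symplectic_dot x y :
  x != y -> \sum_j phi x j * phi y j = - (adj x y)%:R.
Proof. by case: emb => Q _ _ xy; rewrite -[LHS]opprK -/(Qn _ _) Q //; case: (adj x y). Qed.

Lemma symplectic_sqr_norm x : \sum_j phi x j ^+ 2 = - d x.
Proof.
case: emb => _ D _; rewrite -D /Qn opprK.
by apply: eq_bigr => j _; rewrite expr2.
Qed.

Lemma symplectic_sum_coord x : \sum_j phi x j = d x + 2.
Proof.
case: emb => _ D K; have := K x; rewrite D /Qn /Kvec.
under eq_bigr do rewrite mulr1.
by move=> sumK; rewrite -[2]opprK -sumK; ring.
Qed.

(* [d x = 0] would force [phi x = 0], against [\sum_j phi x j = d x + 2]. *)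
Lemma symplectic_deco_le (x : V) : minimal_deco d -> d x <= -2.
Proof.
move=> minimal.
have d_le0 : d x <= 0.
  by rewrite -oppr_ge0 -symplectic_sqr_norm sumr_ge0 // => j _; exact: sqr_ge0.
have d_neq0 : d x != 0.
  apply/eqP => dx0; have := symplectic_sum_coord x; rewrite dx0 add0r big1 //.
  by move=> j _; apply: sumr_sqr_eq0; rewrite symplectic_sqr_norm dx0 oppr0.
by have := minimal x; lia.
Qed.

Variables (i : 'I_n) (v : V).
Hypothesis phi_vi : phi v i = -2.
Hypothesis phi_i0 : forall x, x != v -> phi x i = 0.

Local Notation psi x j := (phi x (lift i j)).

Lemma type3_deleted_dot x y :
  x != y -> \sum_j psi x j * psi y j = - (adj x y)%:R.
Proof.
move=> xy; rewrite -symplectic_dot // (sumr_lift_ord i).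
suff -> : phi x i * phi y i = 0 by rewrite add0r.
have [xv|/phi_i0 ->] := eqVneq x v; last by rewrite mul0r.
by rewrite [phi y i]phi_i0 ?mulr0 // -xv eq_sym.
Qed.

Lemma type3_deleted_sum_v : \sum_j psi v j = - \sum_j psi v j ^+ 2.
Proof.
have := symplectic_sum_coord v; have := symplectic_sqr_norm v.
by rewrite !(sumr_lift_ord i) phi_vi; lra.
Qed.

Lemma type3_deleted_sum_le0 x : minimal_deco d -> \sum_j psi x j <= 0.
Proof.
move=> minimal; have [->|xv] := eqVneq x v.
  by rewrite type3_deleted_sum_v oppr_le0 sumr_ge0 // => j _; exact: sqr_ge0.
have := symplectic_sum_coord x; rewrite (sumr_lift_ord i) phi_i0 // add0r => ->.
by have := symplectic_deco_le x minimal; lia.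
Qed.

Lemma type3_deleted_sum_v_lt0 z : v != z -> adj v z -> \sum_j psi v j < 0.
Proof.
move=> vz_neq vz.
rewrite type3_deleted_sum_v oppr_lt0 lt_def sumr_ge0 ?andbT => [|j _]; last exact: sqr_ge0.
apply/eqP => /sumr_sqr_eq0 psi_v0.
have := type3_deleted_dot vz_neq; rewrite vz big1 // => j _.
by rewrite psi_v0 mul0r.
Qed.

End SymplecticEmbedding.

Theorem theorem3p8 (V : finType) (adj : rel V) (d : V -> int) (n : nat)
    (phi : V -> 'I_n -> int) :
  #|V| = n -> (1 < n)%N ->
  is_tree adj -> minimal_deco d ->
  symplectic_embedding adj d phi ->
  ~ (exists i : 'I_n, type3_index phi i).
Proof.
move=> card_n n_gt1 [[_ adj_irr] _ connected _] minimal emb [i [v [phi_vi phi_i0]]].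
have adj_neq x y : adj x y -> x != y by apply: contraTneq => ->; rewrite adj_irr.
have [z vz] : exists z, adj v z by apply: connected_exists_adj; rewrite ?card_n.
suff : (#|V| <= n.-1)%N by rewrite card_n; lia.
apply: (@int_obtuse_family_card_le _ _ (fun x j => phi x (lift i j)) adj v)
  => [x y xy|x y xy|//|x|] /=.
- by rewrite (type3_deleted_dot emb phi_i0 xy) oppr_le0 ler0n.
- by rewrite (type3_deleted_dot emb phi_i0 (adj_neq _ _ xy)) xy oppr_lt0.
- exact (type3_deleted_sum_le0 emb phi_vi phi_i0 x minimal).
- exact (type3_deleted_sum_v_lt0 emb phi_vi phi_i0 (adj_neq _ _ vz) vz).
Qed.
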